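(* Let $B$ be a skew-symmetrizable matrix and let $A$ and $A'$ be two admissible quasi-Cartan companions of $B$. Then $A'$ can be obtained from $A$ by a sequence of sign changes at vertices (i.e. simultaneous multiplication of the $k$-th row and $k$-th column by $-1$). In particular, $A$ and $A'$ are equivalent.
   Context: An $n\times n$ integer matrix $B$ is skew-symmetrizable if $DB$ is skew-symmetric for some diagonal matrix $D$ with positive diagonal entries. Its diagram $\Gamma(B)$ is the directed graph on vertices $1,\dots,n$ with an edge $i\to j$ iff $B_{ij}>0$, this edge carrying weight $|B_{ij}B_{ji}|$. A cycle in a diagram is an induced subgraph on $r\ge 3$ vertices whose vertices can be labeled $1,\dots,r$ so that $i,j$ are adjacent iff $|i-j|=1$ or $\{i,j\}=\{1,r\}$; it is oriented if its edges form a directed cycle, non-oriented otherwise. A quasi-Cartan matrix is an integer matrix $A$ with all diagonal entries $2$ such that $DA$ is symmetric for some diagonal $D$ with positive diagonal entries (a symmetrizer). A quasi-Cartan companion of $B$ is a quasi-Cartan matrix $A$ with $|A_{ij}|=|B_{ij}|$ for all $i\ne j$. It is admissible if for every cycle $Z$ in $\Gamma(B)$ the product $\prod_{\{i,j\}\in Z}(-A_{ij})$ over the edges of $Z$ is negative when $Z$ is oriented and positive when $Z$ is non-oriented. The sign change at $k$ replaces $A$ by the matrix obtained by multiplying its $k$-th row and $k$-th column by $-1$. Two quasi-Cartan matrices $A,A'$ are equivalent if they have a common symmetrizer $D$ and $DA'=E^T(DA)E$ for some integer matrix $E$ with $\det E=\pm1$. *)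

From HB Require Import structures.
From mathcomp Require Import all_boot all_order all_algebra.
Set Implicit Arguments. Unset Strict Implicit. Unset Printing Implicit Defensive.
Import Order.TTheory GRing.Theory Num.Theory.
Local Open Scope ring_scope.

(* Diagonal matrices with positive diagonal entries are given by their
   diagonal d : 'I_n -> rat. *)

Definition skew_symmetrizable n (B : 'M[int]_n) : Prop :=
  exists d : 'I_n -> rat, (forall i, 0 < d i) /\
    forall i j, d i * (B i j)%:~R = - (d j * (B j i)%:~R).

Definition is_symmetrizer n (A : 'M[int]_n) (d : 'I_n -> rat) : Prop :=
  (forall i, 0 < d i) /\ forall i j, d i * (A i j)%:~R = d j * (A j i)%:~R.

Definition quasi_Cartan n (A : 'M[int]_n) : Prop :=
  (forall i, A i i = 2) /\ exists d, is_symmetrizer A d.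

Definition quasi_Cartan_companion n (B A : 'M[int]_n) : Prop :=
  quasi_Cartan A /\ forall i j, i != j -> `|A i j| = `|B i j|.

Definition diag_edge n (B : 'M[int]_n) (i j : 'I_n) : bool := 0 < B i j.
Definition diag_adj n (B : 'M[int]_n) (i j : 'I_n) : bool :=
  diag_edge B i j || diag_edge B j i.

(* Labels 0..r-1 (the paper's 1..r shifted); a, b adjacent in the cycle
   iff |a - b| = 1 or {a, b} = {0, r-1}. *)
Definition cyc_adj (r a b : nat) : bool :=
  [|| (a.+1 == b)%N, (b.+1 == a)%N,
      ((a == 0)%N && (b == r.-1)%N) | ((b == 0)%N && (a == r.-1)%N)].

Definition is_cycle n (B : 'M[int]_n) (r : nat) (f : nat -> 'I_n) : Prop :=
  (3 <= r)%N /\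
  (forall a b, (a < r)%N -> (b < r)%N -> f a = f b -> a = b) /\
  (forall a b, (a < r)%N -> (b < r)%N ->
     diag_adj B (f a) (f b) = cyc_adj r a b).

Definition cycle_oriented n (B : 'M[int]_n) (r : nat) (f : nat -> 'I_n) : Prop :=
  (forall a, (a < r)%N -> diag_edge B (f a) (f ((a.+1) %% r)%N)) \/
  (forall a, (a < r)%N -> diag_edge B (f ((a.+1) %% r)%N) (f a)).

Definition cycle_product n (A : 'M[int]_n) (r : nat) (f : nat -> 'I_n) : int :=
  \prod_(0 <= a < r) (- A (f a) (f ((a.+1) %% r)%N)).

Definition admissible_companion n (B A : 'M[int]_n) : Prop :=
  quasi_Cartan_companion B A /\
  forall r f, is_cycle B r f ->
    (cycle_oriented B r f -> cycle_product A r f < 0) /\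
    (~ cycle_oriented B r f -> 0 < cycle_product A r f).

Definition sign_change n (k : 'I_n) (A : 'M[int]_n) : 'M[int]_n :=
  \matrix_(i, j) ((-1) ^+ (i == k) * (-1) ^+ (j == k) * A i j).

Definition sign_changes n (ks : seq 'I_n) (A : 'M[int]_n) : 'M[int]_n :=
  foldl (fun M k => sign_change k M) A ks.

Definition intmx_to_rat n (M : 'M[int]_n) : 'M[rat]_n := map_mx (fun x => x%:~R) M.

Definition qC_equivalent n (A A' : 'M[int]_n) : Prop :=
  exists d : 'I_n -> rat, is_symmetrizer A d /\ is_symmetrizer A' d /\
  exists E : 'M[int]_n, (\det E = 1 \/ \det E = -1) /\
    diag_mx (\row_i d i) *m intmx_to_rat A' =
    (intmx_to_rat E)^T *m (diag_mx (\row_i d i) *m intmx_to_rat A) *m intmx_to_rat E.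

(* Compare two admissible companions A and A' through the agreement sign
   sigma(x, y) = sgz (A x y) * sgz (A' x y), which is +1 or -1 on the edges of
   the diagram of B.  Admissibility prescribes the sign of the cycle product
   of every cycle, hence the same sign for A and A': the product of sigma
   along every cycle of the diagram is 1.  A general combinatorial lemma
   extends this to all closed walks: stationary steps and chords reduce a
   closed walk to shorter ones, and a closed walk without them is an induced
   cycle.  Then sigma is a coboundary, sigma(u, v) = e u * e v, where the
   potential e v is the sign of a fixed walk from the root of the connected
   component of v to v.  Hence A' = diag(e) A diag(e), which is the sequence
   of sign changes at the vertices where e = -1, and diag(e) is a unimodular
   matrix realizing the equivalence of A and A'. *)

From HB Require Import structures.
From mathcomp Require Import all_boot all_order all_algebra zify ring.
From Stdlib Require Import Classical.
Import Order.TTheory GRing.Theory Num.Theory.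
Local Open Scope ring_scope.

Set Implicit Arguments.
Unset Strict Implicit.
Unset Printing Implicit Defensive.

(* Walks in a type T are functions h : nat -> T, read on an index range. *)
Section WalkOperations.
Variable T : Type.

Definition walk_cat (p : nat) (g f : nat -> T) (k : nat) : T :=
  if (k <= p)%N then g k else f (k - p)%N.

Definition walk_shift (c : nat) (h : nat -> T) (k : nat) : T := h (k + c)%N.

Definition walk_rev (p : nat) (h : nat -> T) (k : nat) : T := h (p - k)%N.

Definition walk_edge (x y : T) (k : nat) : T := if k == 0%N then x else y.

Lemma walk_catE p g f k : g p = f 0%N -> walk_cat p g f (p + k) = f k.
Proof.
rewrite /walk_cat => gf; case: leqP => [pk|]; last by rewrite addKn.
have k0 : k = 0%N by lia.
by rewrite k0 addn0.
Qed.

End WalkOperations.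

Section WalkSign.
Variables (T : Type) (sg : T -> T -> int).

Definition walk_sign (h : nat -> T) (a b : nat) : int :=
  \prod_(a <= k < b) sg (h k) (h k.+1).

Lemma walk_sign_cat h a m b : (a <= m <= b)%N ->
  walk_sign h a b = walk_sign h a m * walk_sign h m b.
Proof. by move=> /andP [am mb]; rewrite /walk_sign (@big_cat_nat _ _ _ m). Qed.

Lemma walk_sign1 h a : walk_sign h a a.+1 = sg (h a) (h a.+1).
Proof. by rewrite /walk_sign big_nat1. Qed.

Lemma eq_walk_sign g h a b :
  (forall k, (a <= k <= b)%N -> g k = h k) -> walk_sign g a b = walk_sign h a b.
Proof. by move=> gh; apply: eq_big_nat => k kab; rewrite !gh //; lia. Qed.

Lemma walk_sign_shift c h m : walk_sign (walk_shift c h) 0 m = walk_sign h c (m + c).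
Proof.
rewrite /walk_sign -[in RHS](add0n c) big_addn addnK.
by apply: eq_big_nat => k _; rewrite /walk_shift addSn.
Qed.

Lemma walk_sign_edge x y : walk_sign (walk_edge x y) 0 1 = sg x y.
Proof. exact: walk_sign1. Qed.

Lemma walk_sign_walk_cat p q g f : g p = f 0%N ->
  walk_sign (walk_cat p g f) 0 (p + q) = walk_sign g 0 p * walk_sign f 0 q.
Proof.
move=> gf; rewrite (@walk_sign_cat _ 0 p) ?leq0n ?leq_addr //; congr (_ * _).
  by apply: eq_walk_sign => k /andP [_ kp]; rewrite /walk_cat kp.
rewrite [(p + q)%N]addnC -walk_sign_shift.
by apply: eq_walk_sign => k _; rewrite /walk_shift addnC walk_catE.
Qed.

Lemma walk_sign_rev (sg_sym : forall x y, sg x y = sg y x) p h :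
  walk_sign (walk_rev p h) 0 p = walk_sign h 0 p.
Proof.
rewrite /walk_sign big_nat_rev /=; apply: eq_big_nat => k /andP [_ kp].
by rewrite /walk_rev add0n sg_sym; congr (sg (h _) (h _)); lia.
Qed.

End WalkSign.

Section Walks.
Variables (T : Type) (R : rel T).

Definition walk (s : nat) (h : nat -> T) : Prop :=
  forall k, (k < s)%N -> R (h k) (h k.+1).

Definition closed_walk (s : nat) (h : nat -> T) : Prop := walk s h /\ h s = h 0%N.

Lemma walk_walk_cat p q g f :
  walk p g -> walk q f -> g p = f 0%N -> walk (p + q) (walk_cat p g f).
Proof.
move=> wg wf gf k kpq; rewrite /walk_cat; case: (ltngtP k p) => [kp|pk|kp].
- exact: wg.
- by rewrite subSn ?(ltnW pk) //; apply: wf; lia.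
- by rewrite kp subSnn gf; apply: wf; lia.
Qed.

Lemma walk_prefix s m h : (m <= s)%N -> walk s h -> walk m h.
Proof. by move=> ms wh k km; apply: wh; lia. Qed.

Lemma walk_walk_shift s c m h : (m + c <= s)%N -> walk s h -> walk m (walk_shift c h).
Proof. by move=> mcs wh k km; apply: wh; lia. Qed.

Lemma walk_walk_edge x y : R x y -> walk 1 (walk_edge x y).
Proof. by move=> xy [|]. Qed.

Lemma walk_walk_rev (R_sym : symmetric R) p h : walk p h -> walk p (walk_rev p h).
Proof.
move=> wh k kp; rewrite /walk_rev R_sym; have -> : (p - k = (p - k.+1).+1)%N by lia.
by apply: wh; lia.
Qed.

End Walks.

Section ClosedWalkSign.
Variables (T : eqType) (R : rel T) (sg : T -> T -> int).
Hypothesis R_sym : symmetric R.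
Hypothesis sg_refl : forall x, sg x x = 1.
Hypothesis sg_inv : forall x y, R x y -> sg x y * sg y x = 1.

(* A closed walk of length at least 3 without stationary steps, in which
   only cyclically consecutive positions are R-related. *)
Definition induced_closed_walk (s : nat) (h : nat -> T) : Prop :=
  [/\ (3 <= s)%N, closed_walk R s h, forall k, (k < s)%N -> h k != h k.+1 &
      forall a b, (a.+2 <= b)%N -> (b + 2 <= s + a)%N -> (b < s)%N -> ~~ R (h a) (h b)].

Definition shorter_walks_trivial (s : nat) : Prop :=
  forall s' h, (s' < s)%N -> closed_walk R s' h -> walk_sign sg h 0 s' = 1.

(* Removing a stationary step h a = h (a+1) gives a shorter closed walk of the
   same sign. *)
Lemma stationary_step_sign s h a : shorter_walks_trivial s ->
  closed_walk R s h -> (a < s)%N -> h a = h a.+1 -> walk_sign sg h 0 s = 1.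
Proof.
move=> short [wh hs] as_ ha; pose h' := walk_cat a h (walk_shift a.+1 h).
have glue : h a = walk_shift a.+1 h 0 by [].
have -> : walk_sign sg h 0 s = walk_sign sg h' 0 (a + (s - a.+1)).
  rewrite walk_sign_walk_cat // walk_sign_shift subnK //.
  rewrite (@walk_sign_cat _ _ _ 0 a); last by lia.
  rewrite (@walk_sign_cat _ _ _ a a.+1); last by lia.
  by rewrite walk_sign1 -ha sg_refl mul1r.
apply: short; first by lia.
split; last by rewrite /h' walk_catE // /walk_shift subnK.
apply: walk_walk_cat => //; first by apply: (walk_prefix (s := s)) => //; lia.
by apply: (walk_walk_shift (s := s)) => //; lia.
Qed.

(* A chord h a -- h b splits a closed walk into two shorter closed walks
   whose signs multiply to the sign of the original walk. *)
Lemma chord_sign s h a b : shorter_walks_trivial s -> closed_walk R s h ->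
  (a.+2 <= b)%N -> (b + 2 <= s + a)%N -> (b < s)%N -> R (h a) (h b) ->
  walk_sign sg h 0 s = 1.
Proof.
move=> short [wh hs] ab bs b_s chord.
pose h1 := walk_cat (b - a) (walk_shift a h) (walk_edge (h b) (h a)).
pose h2 := walk_cat a h (walk_cat 1 (walk_edge (h a) (h b)) (walk_shift b h)).
have glue1 : walk_shift a h (b - a) = walk_edge (h b) (h a) 0.
  by rewrite /walk_shift subnK //; lia.
have glue2 : walk_edge (h a) (h b) 1 = walk_shift b h 0 by [].
have W1 : walk_sign sg h1 0 (b - a + 1) = walk_sign sg h a b * sg (h b) (h a).
  by rewrite walk_sign_walk_cat // walk_sign_shift walk_sign_edge subnK //; lia.
have W2 : walk_sign sg h2 0 (a + (1 + (s - b))) =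
          walk_sign sg h 0 a * (sg (h a) (h b) * walk_sign sg h b s).
  by rewrite !walk_sign_walk_cat // walk_sign_edge walk_sign_shift subnK //; lia.
have E1 : walk_sign sg h1 0 (b - a + 1) = 1.
  apply: short; first by lia.
  split; last by rewrite /h1 walk_catE.
  apply: walk_walk_cat => //; last by apply: walk_walk_edge; rewrite R_sym.
  by apply: (walk_walk_shift (s := s)) => //; lia.
have E2 : walk_sign sg h2 0 (a + (1 + (s - b))) = 1.
  apply: short; first by lia.
  split; last by rewrite /h2 !walk_catE // /walk_shift subnK //; lia.
  apply: walk_walk_cat => //; first by apply: (walk_prefix (s := s)) => //; lia.
  apply: walk_walk_cat => //; first exact: walk_walk_edge chord.
  by apply: (walk_walk_shift (s := s)) => //; lia.
have chord_inv : sg (h b) (h a) * sg (h a) (h b) = 1 by apply: sg_inv; rewrite R_sym.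
rewrite (@walk_sign_cat _ _ _ 0 a); last by lia.
rewrite (@walk_sign_cat _ _ _ a b); last by lia.
rewrite -[RHS]mul1r -{1}E1 -E2 W1 W2 -[LHS]mulr1 -chord_inv.
ring.
Qed.

Hypothesis induced_sign : forall s h, induced_closed_walk s h -> walk_sign sg h 0 s = 1.

(* Every closed R-walk has sign 1: by strong induction on the length, a
   stationary step or a chord reduces to shorter closed walks, and what
   remains is either a walk of length at most 2 or an induced closed walk. *)
Lemma closed_walk_sign s h : closed_walk R s h -> walk_sign sg h 0 s = 1.
Proof.
elim/ltn_ind: s h => s IH h cw.
have short : shorter_walks_trivial s by move=> s' h' /IH; apply.
case: (classic (exists2 a, (a < s)%N & h a = h a.+1)) => [[a as_ ha]|no_stat].
  exact: stationary_step_sign short cw as_ ha.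
case: (classic (exists a b,
  [/\ (a.+2 <= b)%N, (b + 2 <= s + a)%N, (b < s)%N & R (h a) (h b)]))
  => [[a [b [ab bs b_s chord]]]|no_chord].
  exact: chord_sign short cw ab bs b_s chord.
have [wh hs] := cw.
case: (ltnP s 3) => [|s3].
  case: s {IH short cw no_chord} wh hs no_stat => [|[|[|]]] // wh hs no_stat _.
  - by rewrite /walk_sign big_geq.
  - by case: no_stat; exists 0%N.
  - by rewrite /walk_sign big_nat_recr //= big_nat1 hs sg_inv // wh.
apply: induced_sign; split => //.
- by move=> k ks; apply/eqP => e; apply: no_stat; exists k.
- by move=> a b ab bs b_s; apply/negP => chord; apply: no_chord; exists a, b.
Qed.

End ClosedWalkSign.

(* In a finite graph in which every closed walk has sign 1, the edge signs are
   coboundaries: sg u v = eps u * eps v for a sign eps, the potential, obtained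
   by taking the sign of a fixed walk from the root of each connected component. *)
Section Potential.
Variables (T : finType) (R : rel T) (sg : T -> T -> int).
Hypothesis R_sym : symmetric R.
Hypothesis sg_sym : forall x y, sg x y = sg y x.
Hypothesis sg_sq : forall x y, R x y -> sg x y * sg x y = 1.
Hypothesis closed_trivial : forall s h, closed_walk R s h -> walk_sign sg h 0 s = 1.

Lemma exists_root_path v :
  exists p, path R (fingraph.root R v) p && (last (fingraph.root R v) p == v).
Proof.
have : connect R (fingraph.root R v) v by rewrite (sym_connect_sym R_sym) connect_root.
by case/connectP => p pth lst; exists p; rewrite pth -lst eqxx.
Qed.

Definition root_path (v : T) : seq T := xchoose (exists_root_path v).

Definition root_walk (v : T) (k : nat) : T :=
  nth (fingraph.root R v) (fingraph.root R v :: root_path v) k.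

Definition potential (v : T) : int := walk_sign sg (root_walk v) 0 (size (root_path v)).

Lemma walk_root_walk v : walk R (size (root_path v)) (root_walk v).
Proof.
by have /andP [/(pathP (fingraph.root R v)) pth _] := xchooseP (exists_root_path v).
Qed.

Lemma root_walk_end v : root_walk v (size (root_path v)) = v.
Proof.
have /andP [_ /eqP lst] := xchooseP (exists_root_path v).
by rewrite /root_walk -last_nth.
Qed.

Lemma walk_sign_sq s h : walk R s h -> walk_sign sg h 0 s * walk_sign sg h 0 s = 1.
Proof.
move=> wh; rewrite /walk_sign -big_split big_seq_cond /=; apply: big1 => k /andP [kr _].
by apply: sg_sq; apply: wh; rewrite mem_index_iota in kr.
Qed.

Lemma potential_sq v : potential v * potential v = 1.
Proof. exact/walk_sign_sq/walk_root_walk. Qed.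

(* Going to u, crossing the edge u -- v and returning from v to the common root
   is a closed walk; its sign eps u * sg u v * eps v is therefore 1. *)
Lemma potential_edge u v : R u v -> sg u v = potential u * potential v.
Proof.
move=> uv; set Lu := size (root_path u); set Lv := size (root_path v).
pose h := walk_cat Lu (root_walk u)
                   (walk_cat 1 (walk_edge u v) (walk_rev Lv (root_walk v))).
have glue_u : root_walk u Lu = walk_edge u v 0 by exact: root_walk_end.
have glue_v : walk_edge u v 1 = walk_rev Lv (root_walk v) 0.
  by rewrite /walk_rev subn0 root_walk_end.
have same_root : fingraph.root R u = fingraph.root R v.
  by apply/(fingraph.rootP (sym_connect_sym R_sym)); apply: connect1.
have closed : closed_walk R (Lu + (1 + Lv)) h.
  split; last by rewrite /h !walk_catE // /walk_rev subnn /walk_cat /root_walk /= same_root.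
  apply: walk_walk_cat => //; first exact: walk_root_walk.
  apply: walk_walk_cat => //; first exact: walk_walk_edge.
  exact/walk_walk_rev/walk_root_walk.
have := closed_trivial closed.
rewrite !walk_sign_walk_cat // walk_sign_edge walk_sign_rev //.
rewrite -/(potential u) -/(potential v).
move=> cycle1; rewrite -[LHS]mulr1 -(potential_sq u) -[LHS]mulr1 -(potential_sq v).
by rewrite -[RHS]mul1r -cycle1; ring.
Qed.

End Potential.

Section Diagram.
Variables (n : nat) (B : 'M[int]_n).
Hypothesis skewB : skew_symmetrizable B.

Lemma skew_sgz i j : sgz (B i j) = - sgz (B j i).
Proof.
case: skewB => d [d_pos dB]; have := congr1 (@sgz _) (dB i j).
by rewrite sgzN !sgzM (gtr0_sgz (d_pos i)) (gtr0_sgz (d_pos j)) !mul1r !sgz_int.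
Qed.

Lemma diag_adjE i j : diag_adj B i j = (B i j != 0).
Proof.
rewrite /diag_adj /diag_edge -[0 < B j i]sgz_gt0 (skew_sgz j i) oppr_gt0 sgz_lt0.
by rewrite neq_lt orbC.
Qed.

Lemma diag_adj_sym : symmetric (diag_adj B).
Proof. by move=> i j; rewrite /diag_adj orbC. Qed.

Lemma diag_adj_irr i : diag_adj B i i = false.
Proof.
apply/negbTE; rewrite diag_adjE negbK -sgz_eq0.
by have := skew_sgz i i; move: (sgz _) => x x_opp; apply/eqP; lia.
Qed.

Lemma companion_neq0 A i j : quasi_Cartan_companion B A -> i != j ->
  (A i j != 0) = diag_adj B i j.
Proof. by move=> [_ absA] ij; rewrite diag_adjE -normr_eq0 absA // normr_eq0. Qed.

(* Adjacency or equality: walks along this relation may pause at a vertex, and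
   a repeated vertex counts as a chord, so that induced closed walks are cycles. *)
Definition adj_or_eq (x y : 'I_n) : bool := diag_adj B x y || (x == y).

Lemma adj_or_eq_sym : symmetric adj_or_eq.
Proof. by move=> x y; rewrite /adj_or_eq diag_adj_sym eq_sym. Qed.

Lemma induced_walk_adj s h a b :
  induced_closed_walk adj_or_eq s h -> (a < b)%N -> (b < s)%N ->
  h a != h b /\ diag_adj B (h a) (h b) = cyc_adj s a b.
Proof.
move=> [s3 [wh hs] no_stat no_chord] ab b_s.
have step k : (k < s)%N -> h k != h k.+1 /\ diag_adj B (h k) (h k.+1).
  move=> ks; have := wh k ks; rewrite /adj_or_eq => /orP [adj|/eqP eq]; last first.
    by have := no_stat k ks; rewrite eq eqxx.
  by split => //; apply: no_stat.
have [ba|nba] := eqVneq b a.+1.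
  by subst b; have [ne ->] := step a (ltnW b_s); split => //; rewrite /cyc_adj; lia.
have [/andP [/eqP a0 /eqP b_last]|not_last] := boolP ((a == 0%N) && (b == s.-1)).
  have sb : s = b.+1 by lia.
  have [ne adj] := step b b_s; rewrite -sb hs -a0 in ne adj.
  by rewrite eq_sym ne diag_adj_sym adj; split => //; rewrite /cyc_adj; lia.
have := no_chord a b ltac:(lia) ltac:(lia) b_s.
rewrite /adj_or_eq negb_or => /andP [nadj ne]; split => //.
by rewrite (negbTE nadj) /cyc_adj; lia.
Qed.

Lemma induced_walk_cycle s h : induced_closed_walk adj_or_eq s h -> is_cycle B s h.
Proof.
move=> ind; have [s3 _ _ _] := ind; split => //; split.
  move=> a b a_s b_s e; case: (ltngtP a b) => [ab|ba|//].
  - by have [ne _] := induced_walk_adj ind ab b_s; rewrite e eqxx in ne.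
  - by have [ne _] := induced_walk_adj ind ba a_s; rewrite e eqxx in ne.
move=> a b a_s b_s; case: (ltngtP a b) => [ab|ba|<-].
- by have [] := induced_walk_adj ind ab b_s.
- rewrite diag_adj_sym; have [_ ->] := induced_walk_adj ind ba a_s.
  by rewrite /cyc_adj; lia.
- by rewrite diag_adj_irr /cyc_adj; lia.
Qed.

End Diagram.

Lemma symmetrizer_sgz n (M : 'M[int]_n) d i j :
  is_symmetrizer M d -> sgz (M i j) = sgz (M j i).
Proof.
case=> d_pos dM; have := congr1 (@sgz _) (dM i j).
by rewrite !sgzM (gtr0_sgz (d_pos i)) (gtr0_sgz (d_pos j)) !mul1r !sgz_int.
Qed.

Lemma cycle_productE n (M : 'M[int]_n) s h : h s = h 0%N ->
  cycle_product M s h = \prod_(0 <= a < s) (- M (h a) (h a.+1)).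
Proof.
move=> hs; apply: eq_big_nat => a /andP [_ a_s].
case: (ltnP a.+1 s) => [a1s|s_a1]; first by rewrite modn_small.
have a1s : a.+1 = s by lia.
by rewrite a1s modnn hs.
Qed.

Section Companions.
Variables (n : nat) (B A A' : 'M[int]_n).
Hypothesis skewB : skew_symmetrizable B.
Hypothesis admA : admissible_companion B A.
Hypothesis admA' : admissible_companion B A'.

Definition sign_agreement (x y : 'I_n) : int := sgz (A x y) * sgz (A' x y).

Lemma sign_agreement_sym x y : sign_agreement x y = sign_agreement y x.
Proof.
have [[[_ [d symA]] _] _] := admA; have [[[_ [d' symA']] _] _] := admA'.
by rewrite /sign_agreement (symmetrizer_sgz x y symA) (symmetrizer_sgz x y symA').
Qed.

Lemma sign_agreement_refl x : sign_agreement x x = 1.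
Proof.
have [[[diagA _] _] _] := admA; have [[[diagA' _] _] _] := admA'.
by rewrite /sign_agreement diagA diagA'.
Qed.

Lemma sign_agreement_sq x y :
  adj_or_eq B x y -> sign_agreement x y * sign_agreement x y = 1.
Proof.
case: (eqVneq x y) => [->|xy]; first by rewrite sign_agreement_refl.
rewrite /adj_or_eq (negbTE xy) orbF => adj.
have [[compA _] [compA' _]] := (admA, admA').
rewrite /sign_agreement mulrACA !mulz_sg.
by rewrite (companion_neq0 skewB compA xy) (companion_neq0 skewB compA' xy) adj.
Qed.

Lemma sign_agreement_inv x y :
  adj_or_eq B x y -> sign_agreement x y * sign_agreement y x = 1.
Proof. by rewrite [sign_agreement y x]sign_agreement_sym; apply: sign_agreement_sq. Qed.

Lemma sgz_cycle_products s h : h s = h 0%N ->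
  sgz (cycle_product A s h) * sgz (cycle_product A' s h) = walk_sign sign_agreement h 0 s.
Proof.
move=> hs; rewrite !cycle_productE // !(big_morph _ (@sgzM _) (sgz1 _)) -big_split /=.
by apply: eq_bigr => a _; rewrite !sgzN mulrNN.
Qed.

(* Admissibility of both companions: along a cycle A and A' have cycle
   products of the same sign, so the agreement sign of every induced closed
   walk is 1. *)
Lemma induced_walk_agreement s h :
  induced_closed_walk (adj_or_eq B) s h -> walk_sign sign_agreement h 0 s = 1.
Proof.
move=> ind; have [_ [_ hs] _ _] := ind; have cyc := induced_walk_cycle skewB ind.
rewrite -sgz_cycle_products //.
have [or1 nor1] := admA.2 s h cyc; have [or2 nor2] := admA'.2 s h cyc.
case: (classic (cycle_oriented B s h)) => orient.
  by rewrite (ltr0_sgz (or1 orient)) (ltr0_sgz (or2 orient)) mulrNN mulr1.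
by rewrite (gtr0_sgz (nor1 orient)) (gtr0_sgz (nor2 orient)) mulr1.
Qed.

Lemma companion_signs : exists e : 'I_n -> int,
  (forall i, e i * e i = 1) /\ forall i j, A' i j = e i * e j * A i j.
Proof.
have closed_trivial s h :
    closed_walk (adj_or_eq B) s h -> walk_sign sign_agreement h 0 s = 1.
  apply: closed_walk_sign; [exact: adj_or_eq_sym | exact: sign_agreement_refl |
                            exact: sign_agreement_inv | exact: induced_walk_agreement].
pose e := potential sign_agreement (@adj_or_eq_sym n B).
have e_sq i : e i * e i = 1 by apply: potential_sq; apply: sign_agreement_sq.
have e_edge u v : adj_or_eq B u v -> sign_agreement u v = e u * e v.
  by apply: potential_edge => //; [apply: sign_agreement_sym | apply: sign_agreement_sq].
exists e; split => // i j.
have [[[diagA _] _] _] := admA; have [[[diagA' _] _] _] := admA'.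
case: (eqVneq i j) => [<-|ij]; first by rewrite diagA diagA' e_sq mul1r.
have [[compA _] [compA' _]] := (admA, admA').
case: (boolP (diag_adj B i j)) => adj.
  have absE : `|A' i j| = `|A i j| by rewrite compA'.2 // compA.2.
  have sgzE : sgz (A' i j) = sign_agreement i j * sgz (A i j).
    by rewrite /sign_agreement mulrAC mulz_sg (companion_neq0 skewB compA ij) adj mul1r.
  rewrite -e_edge; last by rewrite /adj_or_eq adj.
  by rewrite [A' i j]intEsg [A i j]intEsg !abszE absE sgzE mulrA.
have zero M : quasi_Cartan_companion B M -> M i j = 0.
  by move=> compM; apply/eqP; rewrite -[_ == 0]negbK (companion_neq0 skewB compM ij).
by rewrite (zero A compA) (zero A' compA') mulr0.
Qed.

End Companions.

Lemma sign_cases (x : int) : x * x = 1 -> x = 1 \/ x = -1.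
Proof. by move/eqP; rewrite -expr2 sqrf_eq1 => /orP [] /eqP; [left | right]. Qed.

Lemma sign_changesE n (ks : seq 'I_n) (A : 'M[int]_n) i j :
  sign_changes ks A i j = (-1) ^+ (count_mem i ks) * (-1) ^+ (count_mem j ks) * A i j.
Proof.
elim: ks A => [|k ks IH] A /=; first by rewrite !expr0 !mul1r.
rewrite /sign_changes /= -/(sign_changes ks _) IH /sign_change mxE !exprD ![k == _]eq_sym.
by rewrite [in RHS]mulrACA mulrA; congr (_ * _); exact: mulrC.
Qed.

Section SignConjugation.
Variables (n : nat) (A A' : 'M[int]_n) (e : 'I_n -> int).
Hypothesis e_sign : forall i, e i * e i = 1.
Hypothesis A'E : forall i j, A' i j = e i * e j * A i j.

Lemma sign_conjugation_changes : A' = sign_changes [seq k <- enum 'I_n | e k == -1] A.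
Proof.
have count_neg x : count_mem x [seq k <- enum 'I_n | e k == -1] = (e x == -1).
  rewrite count_uniq_mem; last by rewrite filter_uniq // enum_uniq.
  by rewrite mem_filter mem_enum andbT.
have sign_pow x : (-1) ^+ (e x == -1) = e x by case: (sign_cases (e_sign x)) => ->.
by apply/matrixP => i j; rewrite sign_changesE !count_neg !sign_pow A'E.
Qed.

(* Conjugating by diag(e) is an equivalence of quasi-Cartan matrices: the
   symmetrizer of A is kept, and E = diag(e) is unimodular. *)
Lemma sign_conjugation_equivalent d : is_symmetrizer A d -> qC_equivalent A A'.
Proof.
move=> [d_pos dA]; exists d; split => //; split.
  split => // i j; rewrite !A'E [e j * e i]mulrC !intrM mulrCA dA.
  by rewrite [RHS]mulrCA.
exists (diag_mx (\row_i e i)); split.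
  apply: sign_cases; rewrite det_diag -big_split /=.
  by apply: big1 => i _; rewrite mxE e_sign.
have -> : intmx_to_rat (diag_mx (\row_i e i)) = diag_mx (\row_i ((e i)%:~R : rat)).
  by apply/matrixP => i j; rewrite !mxE; case: (i == j); rewrite ?mulr1n ?mulr0n.
rewrite tr_diag_mx !mul_diag_mx mul_mx_diag; apply/matrixP => i j; rewrite !mxE.
by rewrite A'E !intrM mulrCA [RHS]mulrAC.
Qed.

End SignConjugation.

Theorem mainTheorem1 (n : nat) (B A A' : 'M[int]_n) :
  skew_symmetrizable B ->
  admissible_companion B A ->
  admissible_companion B A' ->
  (exists ks : seq 'I_n, A' = sign_changes ks A) /\ qC_equivalent A A'.
Proof.
move=> skewB admA admA'.
have [e [e_sign A'E]] := companion_signs skewB admA admA'.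
have [[[_ [d symA]] _] _] := admA.
split; first by eexists; exact: sign_conjugation_changes e_sign A'E.
exact: sign_conjugation_equivalent e_sign A'E d symA.
Qed.
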